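(* Assume the setting below ($2\overline{s}$-sparse flatness, in the form of the reconstruction maps $\alpha_I$). Let $\mathcal{I}\subseteq\{1,\dots,p\}$ with $|\mathcal{I}|>p-2\overline{s}$ be such that $\mathrm{Check}(\mathcal{I})$ returns UNSAT. Then there exists $\mathcal{I}_{temp}\subseteq\mathcal{I}$ with $|\mathcal{I}_{temp}|\le p-2\overline{s}+1$ such that $\mathrm{Check}(\mathcal{I}_{temp})$ also returns UNSAT.
   Context: Consider the discrete-time system $x^{(t+1)}=f(x^{(t)},u^{(t)})$, $y^{(t)}=h(x^{(t)})+a^{(t)}$, with state in $\mathcal{X}\subseteq\mathbb{R}^n$, input in $\mathbb{R}^m$, and $p$ scalar sensors $y_i=h_i(x)+a_i$, where $a^{(t)}$ is an arbitrary attack vector. Fix a window length $\tau$ and an input sequence $u$ over the window. For sensor $i$, $H_{u,i}:\mathcal{X}\to\mathbb{R}^\tau$ maps the window-initial state $z$ to $\big(h_i(z),h_i(f_{u^{(1)}}(z)),\dots,h_i(f_{u^{(\tau-1)}\cdots u^{(1)}}(z))\big)$ ($k$-fold compositions of $f(\cdot,u^{(j)})$), and $H_{u,I}=(H_{u,i})_{i\in I}$. $Y=(Y_1,\dots,Y_p)$, $Y_i\in\mathbb{R}^\tau$, are the collected (possibly attacked) measurements over the window, and $Y_I=(Y_i)_{i\in I}$. $\overline{s}\le p/2$ is the bound on attacked sensors. The system is assumed $2\overline{s}$-sparse flat: for every set $I$ of sensors with $|I|\ge p-2\overline{s}$, the outputs of the sensors in $I$ form a flat output, so that there is a reconstruction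 map $\alpha_I:\mathbb{R}^{\tau|I|}\to\mathcal{X}$ with $\alpha_I(H_{u,I}(z))=z$ for all $z\in\mathcal{X}$. For such $I$, the procedure $\mathrm{Check}(I)$ computes $x:=\alpha_I(Y_I)$ and returns SAT if $\|Y_I-H_{u,I}(x)\|=0$ and UNSAT otherwise. *)

From mathcomp Require Import all_boot all_algebra.
From mathcomp Require Import reals.
Set Implicit Arguments. Unset Strict Implicit. Unset Printing Implicit Defensive.
Local Open Scope ring_scope.

Fixpoint traj (R : realType) (n m : nat)
  (f : 'rV[R]_n -> 'rV[R]_m -> 'rV[R]_n) (u : nat -> 'rV[R]_m)
  (k : nat) (z : 'rV[R]_n) : 'rV[R]_n :=
  match k with
  | 0 => z
  | k'.+1 => f (traj f u k' z) (u k'.+1)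
  end.

Definition Hu (R : realType) (n m p tau : nat)
  (f : 'rV[R]_n -> 'rV[R]_m -> 'rV[R]_n) (h : 'I_p -> 'rV[R]_n -> R)
  (u : nat -> 'rV[R]_m) (i : 'I_p) (z : 'rV[R]_n) : 'rV[R]_tau :=
  \row_(k < tau) h i (traj f u k z).

(* the sensors of a set I, used as index type of Y_I and H_{u,I} *)
Definition sens (p : nat) (I : {set 'I_p}) : Type := {i : 'I_p | i \in I}.

Definition Check_SAT (R : realType) (n m p tau : nat)
  (f : 'rV[R]_n -> 'rV[R]_m -> 'rV[R]_n) (h : 'I_p -> 'rV[R]_n -> R)
  (u : nat -> 'rV[R]_m)
  (alpha : forall I : {set 'I_p}, (sens I -> 'rV[R]_tau) -> 'rV[R]_n)
  (Y : 'I_p -> 'rV[R]_tau) (I : {set 'I_p}) : Prop :=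
  let x := alpha I (fun i : sens I => Y (val i)) in
  forall i : sens I, Y (val i) - Hu tau f h u (val i) x = 0.

Definition Check_UNSAT (R : realType) (n m p tau : nat)
  (f : 'rV[R]_n -> 'rV[R]_m -> 'rV[R]_n) (h : 'I_p -> 'rV[R]_n -> R)
  (u : nat -> 'rV[R]_m)
  (alpha : forall I : {set 'I_p}, (sens I -> 'rV[R]_tau) -> 'rV[R]_n)
  (Y : 'I_p -> 'rV[R]_tau) (I : {set 'I_p}) : Prop :=
  ~ Check_SAT f h u alpha Y I.

(* Fix k := p - 2 sbar sensors J0 inside I and let x0 := alpha_J0(Y_J0).
   If every set of k + 1 sensors between J0 and I passed Check, then, since
   alpha_J0 recovers the state of any consistent superset of J0, each of them
   would be explained by the same state x0.  As every sensor of I lies in such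
   a set (I has more than k sensors), Y_I = H_{u,I}(x0), and reconstruction on
   I returns x0, so Check(I) would return SAT. *)

From mathcomp Require Import all_boot all_algebra.
From mathcomp Require Import reals.
From Stdlib Require Import Classical FunctionalExtensionality.
Import GRing.Theory.
Local Open Scope ring_scope.

Lemma exists_subset_card {T : finType} {I : {set T}} {k : nat} :
  (k <= #|I|)%N -> exists2 J : {set T}, J \subset I & #|J| = k.
Proof.
elim: k => [|k IHk] le_k_I; first by exists set0; rewrite ?sub0set ?cards0.
have [J sJI cardJ] := IHk (ltnW le_k_I).
have : (0 < #|I :\: J|)%N by rewrite cardsD (setIidPr sJI) cardJ subn_gt0.
case/card_gt0P => x; rewrite inE => /andP[xNJ xI].
exists (x |: J); first by rewrite subUset sub1set xI.
by rewrite cardsU1 xNJ cardJ.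
Qed.

Section Reconstruction.

Context {R : realType} {n m p tau k : nat}.
Context {X : 'rV[R]_n -> Prop} {f : 'rV[R]_n -> 'rV[R]_m -> 'rV[R]_n}.
Context {h : 'I_p -> 'rV[R]_n -> R} {u : nat -> 'rV[R]_m}.
Context {alpha : forall I : {set 'I_p}, (sens I -> 'rV[R]_tau) -> 'rV[R]_n}.
Context {Y : 'I_p -> 'rV[R]_tau}.

Hypothesis alpha_in_X :
  forall (I : {set 'I_p}) (W : sens I -> 'rV[R]_tau), (k <= #|I|)%N -> X (alpha I W).
Hypothesis alpha_Hu :
  forall (I : {set 'I_p}) z, (k <= #|I|)%N -> X z ->
    alpha I (fun i : sens I => Hu tau f h u (val i) z) = z.

Definition consistent_on (J : {set 'I_p}) (z : 'rV[R]_n) : Prop :=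
  forall i, i \in J -> Y i = Hu tau f h u i z.

Definition alphaY (J : {set 'I_p}) : 'rV[R]_n := alpha J (fun i : sens J => Y (val i)).

Lemma Check_SAT_consistent {J : {set 'I_p}} :
  Check_SAT f h u alpha Y J <-> consistent_on J (alphaY J).
Proof.
rewrite /Check_SAT /=; split => [sat i iJ | cons [i iJ]].
  by apply/eqP; rewrite -subr_eq0; apply/eqP; exact: (sat (exist _ i iJ)).
by apply/eqP; rewrite subr_eq0; apply/eqP; exact: cons.
Qed.

Lemma alphaY_consistent {J : {set 'I_p}} {z} :
  (k <= #|J|)%N -> X z -> consistent_on J z -> alphaY J = z.
Proof.
move=> le_k_J Xz cons; rewrite -[RHS](alpha_Hu J z le_k_J Xz).
by congr (alpha J); apply: functional_extensionality => -[i iJ]; apply: cons.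
Qed.

Lemma Check_SAT_of_consistent {J : {set 'I_p}} {z} :
  (k <= #|J|)%N -> X z -> consistent_on J z -> Check_SAT f h u alpha Y J.
Proof.
by move=> le_k_J Xz cons; apply/Check_SAT_consistent; rewrite (alphaY_consistent le_k_J Xz cons).
Qed.

Lemma alphaY_subset {J0 J : {set 'I_p}} :
  J0 \subset J -> (k <= #|J0|)%N -> Check_SAT f h u alpha Y J -> alphaY J0 = alphaY J.
Proof.
move=> sJ0J le_k_J0 /Check_SAT_consistent cons.
have le_k_J : (k <= #|J|)%N := leq_trans le_k_J0 (subset_leq_card sJ0J).
apply: (alphaY_consistent le_k_J0 (alpha_in_X J _ le_k_J)) => i iJ0.
exact/cons/(subsetP sJ0J).
Qed.

Lemma Check_SAT_of_extensions {J0 I : {set 'I_p}} :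
  J0 \proper I -> (k <= #|J0|)%N ->
  (forall j, j \in I :\: J0 -> Check_SAT f h u alpha Y (j |: J0)) ->
  Check_SAT f h u alpha Y I.
Proof.
move=> ltJ0I le_k_J0 sat_ext.
have [sJ0I _] := properP ltJ0I.
have le_k_I : (k <= #|I|)%N := leq_trans le_k_J0 (subset_leq_card sJ0I).
have ext_cons j : j \in I :\: J0 -> consistent_on (j |: J0) (alphaY J0).
  move=> jIJ0; rewrite (alphaY_subset (subsetUr _ _) le_k_J0 (sat_ext j jIJ0)).
  exact/Check_SAT_consistent/sat_ext.
have [j1 j1IJ0] : exists j1, j1 \in I :\: J0.
  by apply/card_gt0P; rewrite cardsD (setIidPr sJ0I) subn_gt0 proper_card.
apply: (Check_SAT_of_consistent le_k_I (alpha_in_X J0 _ le_k_J0)) => j jI.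
case: (boolP (j \in J0)) => jJ0.
  by apply: (ext_cons j1 j1IJ0); rewrite in_setU1 jJ0 orbT.
by apply: (ext_cons j); rewrite ?in_setD ?jJ0 ?jI ?setU11.
Qed.

End Reconstruction.

Theorem lemma1 (R : realType) (n m p tau sbar : nat)
  (X : 'rV[R]_n -> Prop)
  (f : 'rV[R]_n -> 'rV[R]_m -> 'rV[R]_n)
  (h : 'I_p -> 'rV[R]_n -> R)
  (u : nat -> 'rV[R]_m)
  (alpha : forall I : {set 'I_p}, (sens I -> 'rV[R]_tau) -> 'rV[R]_n)
  (Y : 'I_p -> 'rV[R]_tau) :
  (2 * sbar <= p)%N ->
  (forall x v, X x -> X (f x v)) ->
  (* alpha_I : R^{tau |I|} -> X *)
  (forall (I : {set 'I_p}) (W : sens I -> 'rV[R]_tau), (p - 2 * sbar <= #|I|)%N -> X (alpha I W)) ->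
  (* 2 sbar-sparse flatness: alpha_I (H_{u,I} z) = z on X *)
  (forall (I : {set 'I_p}) z, (p - 2 * sbar <= #|I|)%N -> X z ->
     alpha I (fun i : sens I => Hu tau f h u (val i) z) = z) ->
  forall I : {set 'I_p},
    (p - 2 * sbar < #|I|)%N ->
    Check_UNSAT f h u alpha Y I ->
    exists Itemp : {set 'I_p},
      [/\ Itemp \subset I,
          (p - 2 * sbar <= #|Itemp|)%N,
          (#|Itemp| <= p - 2 * sbar + 1)%N &
          Check_UNSAT f h u alpha Y Itemp].
Proof.
move=> _ _ alpha_in_X alpha_Hu I lt_k_I unsatI.
apply: NNPP => no_Itemp; apply: unsatI.
have [J0 sJ0I cardJ0] := exists_subset_card (ltnW lt_k_I).
have ltJ0I : J0 \proper I by rewrite properEcard sJ0I cardJ0.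
apply: (Check_SAT_of_extensions alpha_in_X alpha_Hu ltJ0I) => [|j]; first by rewrite cardJ0.
rewrite in_setD => /andP[jNJ0 jI]; apply: NNPP => unsat_ext; apply: no_Itemp.
have cardJ : #|j |: J0| = (p - 2 * sbar).+1 by rewrite cardsU1 jNJ0 cardJ0.
exists (j |: J0); split => //; first by rewrite subUset sub1set jI.
  by rewrite cardJ.
by rewrite cardJ addn1.
Qed.
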